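(* Let $S$ be any shape having $k$ turning points and $l$ line segments, and let $i(S)$ be the incompressible shape obtained from $S$ by compressing all its compressible columns and rows. Then: (a) $i(S)$ has $k$ turning points and $l$ line segments; (b) there is a one-to-one correspondence between the turning points and line segments of $i(S)$ and those of $S$ such that $i(S)$ and $S$ are geometrically equivalent up to the lengths of their line segments, the length of each line segment of $i(S)$ is at most the length of the corresponding line segment of $S$, and the relative order of the turning points with respect to each other (in both coordinates) is the same in $S$ and $i(S)$; (c) $i(S)$ fits within a $k\times k$ square area of the grid.
   Context: A shape $S=(V,E)$ is a finite connected graph whose nodes occupy distinct integer grid points and whose edges join only nodes at orthogonal distance $1$. A node $u$ is a turning point of $S$ if $u$ is a leaf or $u$ has two neighbors $v_1,v_2$ with $v_1u$ perpendicular to $uv_2$. A line segment is a maximal straight path of $S$ between two turning points containing no other turning point. A column (row) of $S$ is a grid column (row) containing nodes of $S$; it is compressible if it contains no turning point of $S$ (then it contains no vertical (horizontal) edges and meets only horizontal (vertical) segments, each of which extends through it). For a maximal run $C_l,\dots,C_r$ of consecutive compressible columns, every horizontal segment $s$ meeting them has a node $u_{l-1}(s)$ in column $C_{l-1}$ and a node $u_{r+1}(s)$ in $C_{r+1}$; a compression operation deletes the nodes in columns $C_l,\dots,C_r$, shifts everything to the right of $C_r$ left by $r-l+1$ units, and joins $u_{l-1}(s)$ to $u_{r+1}(s)$ for each such $s$. Compression of rows is defined analogously. A shape is incompressible if it has no compressible columns or rows; $i(S)$ denotes the incompressible shape obtained by compressing all compressible columns and rows of $S$. *)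

From HB Require Import structures.
From mathcomp Require Import all_boot all_order all_algebra.
From mathcomp Require Import finmap.
Set Implicit Arguments. Unset Strict Implicit. Unset Printing Implicit Defensive.
Import Order.TTheory GRing.Theory Num.Theory.
Local Open Scope fset_scope.
Local Open Scope ring_scope.

(** Grid points: (x, y) = (column, row). *)
Definition pt := (int * int)%type.

(** A graph drawn on the grid: node set and (undirected) edge set. *)
Record gshape := Shape { V : {fset pt}; E : {fset pt * pt} }.

Definition adj (S : gshape) (u v : pt) : bool :=
  ((u, v) \in E S) || ((v, u) \in E S).

Definition unit_dist (u v : pt) : bool :=
  ((u.1 == v.1) && (`|u.2 - v.2| == 1)) || ((u.2 == v.2) && (`|u.1 - v.1| == 1)).

Definition connected (S : gshape) : Prop :=
  forall u v, u \in V S -> v \in V S ->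
    exists p : seq pt, [/\ path (adj S) u p, last u p = v &
                           all (fun x => x \in V S) p].

Definition is_shape (S : gshape) : Prop :=
  [/\ V S != fset0,
      (forall e, e \in E S -> [/\ e.1 \in V S, e.2 \in V S & unit_dist e.1 e.2])
    & connected S].

Definition hnbr (S : gshape) (u : pt) : bool :=
  adj S u (u.1 + 1, u.2) || adj S u (u.1 - 1, u.2).
Definition vnbr (S : gshape) (u : pt) : bool :=
  adj S u (u.1, u.2 + 1) || adj S u (u.1, u.2 - 1).
Definition deg (S : gshape) (u : pt) : nat :=
  count (adj S u) [:: (u.1 + 1, u.2); (u.1 - 1, u.2); (u.1, u.2 + 1); (u.1, u.2 - 1)].

Definition turningb (S : gshape) (u : pt) : bool :=
  (u \in V S) && ((deg S u == 1)%N || (hnbr S u && vnbr S u)).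

Definition tps (S : gshape) : {fset pt} := [fset u in V S | turningb S u].

(** Line segment from u to v (u left of / below v): a straight path of S
    between two turning points containing no other turning point. *)
Definition hsegb (S : gshape) (u v : pt) : bool :=
  let n := absz (v.1 - u.1) in
  [&& u.2 == v.2, u.1 < v.1, turningb S u, turningb S v,
      all (fun i : nat => adj S (u.1 + i%:Z, u.2) (u.1 + i%:Z + 1, u.2)) (iota 0 n)
    & all (fun i : nat => ~~ turningb S (u.1 + i%:Z, u.2)) (iota 1 n.-1)].
Definition vsegb (S : gshape) (u v : pt) : bool :=
  let n := absz (v.2 - u.2) in
  [&& u.1 == v.1, u.2 < v.2, turningb S u, turningb S v,
      all (fun i : nat => adj S (u.1, u.2 + i%:Z) (u.1, u.2 + i%:Z + 1)) (iota 0 n)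
    & all (fun i : nat => ~~ turningb S (u.1, u.2 + i%:Z)) (iota 1 n.-1)].
Definition segb (S : gshape) (u v : pt) : bool := hsegb S u v || vsegb S u v.

(** the set of line segments, each represented by its pair of endpoints *)
Definition segs (S : gshape) : {fset pt * pt} :=
  [fset p in tps S `*` tps S | segb S p.1 p.2].

Definition seg_len (u v : pt) : nat := (absz (v.1 - u.1) + absz (v.2 - u.2))%N.

Definition compressible_col (S : gshape) (x : int) : Prop :=
  (exists p, p \in V S /\ p.1 = x) /\ (forall p, p \in tps S -> p.1 <> x).
Definition compressible_row (S : gshape) (y : int) : Prop :=
  (exists p, p \in V S /\ p.2 = y) /\ (forall p, p \in tps S -> p.2 <> y).

Definition max_col_run (S : gshape) (l r : int) : Prop :=
  [/\ l <= r, (forall x, l <= x <= r -> compressible_col S x),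
      ~ compressible_col S (l - 1) & ~ compressible_col S (r + 1)].
Definition max_row_run (S : gshape) (l r : int) : Prop :=
  [/\ l <= r, (forall y, l <= y <= r -> compressible_row S y),
      ~ compressible_row S (l - 1) & ~ compressible_row S (r + 1)].

(** compression of the columns l..r: delete their nodes, shift everything to
    the right of column r left by r-l+1, and join u_{l-1}(s) to u_{r+1}(s)
    for each horizontal segment s crossing the run (one per node of column l). *)
Definition shiftc (l r : int) (p : pt) : pt :=
  if r < p.1 then (p.1 - (r - l + 1), p.2) else p.
Definition keepc (l r : int) (p : pt) : bool := ~~ ((l <= p.1) && (p.1 <= r)).

Definition compress_cols (S : gshape) (l r : int) : gshape :=
  Shape (shiftc l r @` [fset p in V S | keepc l r p])
        (((fun e : pt * pt => (shiftc l r e.1, shiftc l r e.2))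
            @` [fset e in E S | keepc l r e.1 && keepc l r e.2])
         `|` ((fun p : pt => ((l - 1, p.2), (l, p.2)))
            @` [fset p in V S | p.1 == l])).

Definition trp (p : pt) : pt := (p.2, p.1).
Definition trS (S : gshape) : gshape :=
  Shape (trp @` V S) ((fun e : pt * pt => (trp e.1, trp e.2)) @` E S).
Definition compress_rows (S : gshape) (l r : int) : gshape :=
  trS (compress_cols (trS S) l r).

Inductive compress_step (S : gshape) : gshape -> Prop :=
| cstep_col l r : max_col_run S l r -> compress_step S (compress_cols S l r)
| cstep_row l r : max_row_run S l r -> compress_step S (compress_rows S l r).

Inductive compresses : gshape -> gshape -> Prop :=
| compresses_refl S : compresses S S
| compresses_step S1 S2 S3 :
    compress_step S1 S2 -> compresses S2 S3 -> compresses S1 S3.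

Definition incompressible (S : gshape) : Prop :=
  (forall x, ~ compressible_col S x) /\ (forall y, ~ compressible_row S y).

(** S fits within a k x k square area of the grid (k x k grid points) *)
Definition fits_in (k : nat) (S : gshape) : Prop :=
  exists x0 y0 : int, forall p, p \in V S ->
    (x0 <= p.1 < x0 + k%:Z) /\ (y0 <= p.2 < y0 + k%:Z).

(* A column without turning points is crossed only by horizontal segments, each
   passing straight through it, so next to a maximal run of such columns the
   shape is a bundle of parallel horizontal lines, which the compression bridges.
   The shift of the columns right of the run therefore keeps the neighbourhood of
   every surviving node: it maps the turning points bijectively onto those of the
   compressed shape, preserves their order in both coordinates and the segments
   between them, and shortens segments only. Rows are columns of the transposed
   shape. For (c), every occupied column of an incompressible shape contains a
   turning point and connectedness makes the occupied columns an interval, so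
   there are at most k of them; likewise for rows. A one-node shape has no
   turning point and compresses to the empty shape. *)

From HB Require Import structures.
From mathcomp Require Import all_boot all_order all_algebra.
From mathcomp Require Import finmap zify.
Import Order.TTheory GRing.Theory Num.Theory.
Local Open Scope fset_scope.
Local Open Scope ring_scope.
Set Implicit Arguments. Unset Strict Implicit.

Lemma pt_ext (u v : pt) : u.1 = v.1 -> u.2 = v.2 -> u = v.
Proof. by case: u v => [? ?] [? ?] /= -> ->. Qed.

Lemma adjC S u v : adj S u v = adj S v u.
Proof. by rewrite /adj orbC. Qed.

Lemma unit_distC u v : unit_dist u v = unit_dist v u.
Proof. by rewrite /unit_dist (eq_sym u.1) (eq_sym u.2) (distrC u.2) (distrC u.1). Qed.

Lemma unit_distP (u v : pt) : unit_dist u v ->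
  [\/ v = (u.1 + 1, u.2), v = (u.1 - 1, u.2), v = (u.1, u.2 + 1) | v = (u.1, u.2 - 1)].
Proof.
case: u v => [a b] [c d]; rewrite /unit_dist /= => h.
have : (c, d) \in [:: (a + 1, b); (a - 1, b); (a, b + 1); (a, b - 1)].
  by move: h; rewrite !inE !xpair_eqE; lia.
by rewrite !inE => /or4P[] /eqP ->; constructor.
Qed.

Lemma degE S u : deg S u =
  addn (addn (addn (adj S u (u.1 + 1, u.2)) (adj S u (u.1 - 1, u.2)))
             (adj S u (u.1, u.2 + 1))) (adj S u (u.1, u.2 - 1)).
Proof. by rewrite /deg /= !addnA addn0. Qed.

Lemma mem_tps S u : (u \in tps S) = turningb S u.
Proof. by rewrite /tps !inE /turningb andbA andbb. Qed.

Lemma tps_sub S u : u \in tps S -> u \in V S.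
Proof. by rewrite mem_tps => /andP[]. Qed.

Lemma mem_segs S (q : pt * pt) :
  (q \in segs S) = [&& q.1 \in tps S, q.2 \in tps S & segb S q.1 q.2].
Proof. by rewrite /segs !inE -!andbA. Qed.

Definition wf_edges (S : gshape) : Prop :=
  forall e, e \in E S -> [/\ e.1 \in V S, e.2 \in V S & unit_dist e.1 e.2].

Section WellFormedEdges.

Variable S : gshape.
Hypothesis wfS : wf_edges S.

Lemma adj_wf u v : adj S u v -> [/\ u \in V S, v \in V S & unit_dist u v].
Proof. by case/orP=> /wfS[] //= hv hu; rewrite unit_distC. Qed.

Lemma adj_deg_gt0 u v : adj S u v -> (0 < deg S u)%N.
Proof.
move=> huv; rewrite /deg -has_count; apply/hasP; exists v => //.
by have [_ _ /unit_distP[]->] := adj_wf huv; rewrite !inE eqxx ?orbT.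
Qed.

Lemma adj_non_unit u v : ~~ unit_dist u v -> adj S u v = false.
Proof. by move=> nuv; apply/negbTE; apply: contra nuv => /adj_wf[]. Qed.

End WellFormedEdges.

Lemma no_nat_injection (A : {fset pt}) (f : nat -> pt) :
  injective f -> ~ (forall n, f n \in A).
Proof.
move=> inj_f fA.
have sub : {subset [seq f i | i <- iota 0 (#|` A|).+1] <= enum_fset A}.
  by move=> x /mapP[i _ ->]; exact: fA.
have := uniq_leq_size _ sub.
by rewrite map_inj_uniq // iota_uniq size_map size_iota ltnn => /(_ isT).
Qed.

(** * Transposition *)

Lemma trpK : involutive trp. Proof. by case. Qed.
Lemma trp_inj : injective trp. Proof. exact: inv_inj trpK. Qed.

Definition trE (e : pt * pt) : pt * pt := (trp e.1, trp e.2).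
Lemma trEK : involutive trE. Proof. by case=> [[? ?] [? ?]]. Qed.
Lemma trE_inj : injective trE. Proof. exact: inv_inj trEK. Qed.

Lemma unit_dist_trp a b : unit_dist (trp a) (trp b) = unit_dist a b.
Proof. by case: a b => [? ?] [? ?]; rewrite /unit_dist /= orbC. Qed.

Lemma seg_len_trp u v : seg_len (trp u) (trp v) = seg_len u v.
Proof. by rewrite /seg_len addnC. Qed.

Lemma trSK : involutive trS.
Proof.
case=> V0 E0; rewrite /trS /=; congr Shape; apply/fsetP => x.
  by rewrite -{1}(trpK x) !(mem_imfset _ _ trp_inj).
rewrite -(trEK x) -[_ @` (_ @` E0)]/(trE @` (trE @` E0)).
by rewrite !(mem_imfset _ _ trE_inj) trEK.
Qed.

Lemma mem_trS_V S p : (trp p \in V (trS S)) = (p \in V S).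
Proof. exact: (mem_imfset _ _ trp_inj). Qed.

Lemma mem_trS_V' S p : (p \in V (trS S)) = (trp p \in V S).
Proof. by rewrite -{1}(trpK p) mem_trS_V. Qed.

Lemma adj_trS S a b : adj (trS S) (trp a) (trp b) = adj S a b.
Proof.
by rewrite /adj /trS /= -[(trp a, trp b)]/(trE (a, b)) -[(trp b, trp a)]/(trE (b, a))
  !(mem_imfset _ _ trE_inj).
Qed.

Lemma adj_trS_xy S (x y z w : int) : adj (trS S) (x, y) (z, w) = adj S (y, x) (w, z).
Proof. exact: (adj_trS S (y, x) (w, z)). Qed.

Lemma deg_trS S a : deg (trS S) (trp a) = deg S a.
Proof. case: a => x y; rewrite !degE /= !adj_trS_xy /=; lia. Qed.

Lemma turningb_trS S a : turningb (trS S) (trp a) = turningb S a.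
Proof.
rewrite /turningb mem_trS_V deg_trS (andbC (hnbr S a)).
by case: a => x y; rewrite /hnbr /vnbr /= !adj_trS_xy.
Qed.

Lemma turningb_trS_xy S (x y : int) : turningb (trS S) (x, y) = turningb S (y, x).
Proof. exact: (turningb_trS S (y, x)). Qed.

Lemma tps_trS S : tps (trS S) = trp @` tps S.
Proof.
apply/fsetP => p; rewrite -(trpK p) (mem_imfset _ _ trp_inj) !mem_tps.
exact: turningb_trS.
Qed.

Lemma hsegb_trS S u v : hsegb (trS S) (trp u) (trp v) = vsegb S u v.
Proof.
case: u v => [a b] [c d]; rewrite /hsegb /vsegb /= !turningb_trS_xy.
congr [&& _, _, _, _, _ & _].
- by apply: eq_all => i /=; rewrite adj_trS_xy.
- by apply: eq_all => i /=; rewrite turningb_trS_xy.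
Qed.

Lemma vsegb_trS S u v : vsegb (trS S) (trp u) (trp v) = hsegb S u v.
Proof. by rewrite -hsegb_trS trSK !trpK. Qed.

Lemma segb_trS S u v : segb (trS S) (trp u) (trp v) = segb S u v.
Proof. by rewrite /segb hsegb_trS vsegb_trS orbC. Qed.

Lemma compressible_row_trS S y : compressible_row S y <-> compressible_col (trS S) y.
Proof.
rewrite /compressible_row /compressible_col tps_trS; split.
- case=> [[p [hp <-]] hS]; split; first by exists (trp p); rewrite mem_trS_V.
  by move=> _ /imfsetP[q /= hq ->]; exact: hS.
- case=> [[p [hp <-]] hS]; split; first by exists (trp p); rewrite -mem_trS_V'.
  by move=> q hq; apply: (hS (trp q)); rewrite (mem_imfset _ _ trp_inj).
Qed.

Lemma max_row_run_trS S l r : max_row_run S l r <-> max_col_run (trS S) l r.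
Proof.
split; case=> lr run nl nr; split=> //.
- by move=> y /run /compressible_row_trS.
- by rewrite -compressible_row_trS.
- by rewrite -compressible_row_trS.
- by move=> y /run /compressible_row_trS.
- by rewrite compressible_row_trS.
- by rewrite compressible_row_trS.
Qed.

Definition no_isolated (S : gshape) : Prop := forall p, p \in V S -> (0 < deg S p)%N.

Definition cols_convex (S : gshape) : Prop := forall p q : pt, p \in V S -> q \in V S ->
  forall x : int, p.1 <= x <= q.1 -> exists2 z : pt, z \in V S & z.1 = x.

Definition rows_convex (S : gshape) : Prop := forall p q : pt, p \in V S -> q \in V S ->
  forall y : int, p.2 <= y <= q.2 -> exists2 z : pt, z \in V S & z.2 = y.

(* The consequences of connectedness that survive compression, which are all
   the argument needs. *)
Definition shape_inv (S : gshape) : Prop :=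
  [/\ wf_edges S, no_isolated S, cols_convex S & rows_convex S].

Lemma shape_inv_trS S : shape_inv S -> shape_inv (trS S).
Proof.
case=> wfS niS ccS rcS; split.
- move=> _ /imfsetP[e /= he ->]; have [ha hb hab] := wfS e he.
  by rewrite /= !mem_trS_V unit_dist_trp.
- by move=> p; rewrite mem_trS_V' -{2}(trpK p) deg_trS; exact: niS.
- move=> p q; rewrite !mem_trS_V' => hp hq x /(rcS _ _ hp hq)[z hz <-].
  by exists (trp z); rewrite ?mem_trS_V.
- move=> p q; rewrite !mem_trS_V' => hp hq y /(ccS _ _ hp hq)[z hz <-].
  by exists (trp z); rewrite ?mem_trS_V.
Qed.

Lemma path_ivt S (c : pt -> int) (s : seq pt) (p : pt) : wf_edges S ->
  (forall u v, unit_dist u v -> c v <= c u + 1) ->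
  path (adj S) p s -> p \in V S -> all (fun x => x \in V S) s ->
  forall x, c p <= x <= c (last p s) -> exists2 z : pt, z \in V S & c z = x.
Proof.
move=> wfS cstep; elim: s p => [|z s IH] p /=.
  by move=> _ hp _ x hx; exists p => //; lia.
case/andP=> hpz hpath hp /andP[hz hall] x hx.
case: (leP x (c p)) => hxp; first by exists p => //; lia.
apply: (IH z hpath hz hall x); have [_ _ /cstep] := adj_wf wfS hpz; lia.
Qed.

Lemma shape_inv_of_shape S : is_shape S -> (1 < #|` V S|)%N -> shape_inv S.
Proof.
case=> _ wfS conS S2; split=> //.
- move=> p hp; have /fset0Pn[q] : V S `\ p != fset0.
    by apply: contraTneq S2 => VSp; rewrite (cardfsD1 p) hp VSp cardfs0.
  rewrite !inE => /andP[qp hq]; have [[|z s] [/= hs hl _]] := conS p q hp hq.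
    by rewrite hl eqxx in qp.
  by case/andP: hs => /(adj_deg_gt0 wfS).
- move=> p q hp hq x; have [s [hs <- hall]] := conS p q hp hq.
  by apply: (path_ivt wfS) => // u v /unit_distP[] ->; rewrite /=; lia.
- move=> p q hp hq y; have [s [hs <- hall]] := conS p q hp hq.
  by apply: (path_ivt wfS) => // u v /unit_distP[] ->; rewrite /=; lia.
Qed.

Definition tp_corr (S T : gshape) (f : pt -> pt) : Prop :=
  [/\ {in tps S &, injective f},
      f @` tps S = tps T,
      {in tps S &, forall u v,
         [/\ (u.1 < v.1) = ((f u).1 < (f v).1),
             (u.1 == v.1) = ((f u).1 == (f v).1),
             (u.2 < v.2) = ((f u).2 < (f v).2) &
             (u.2 == v.2) = ((f u).2 == (f v).2)]},
      {in tps S &, forall u v, segb S u v = segb T (f u) (f v)} &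
      {in tps S &, forall u v, segb S u v ->
         (seg_len (f u) (f v) <= seg_len u v)%N}].

Lemma tp_corr_id S : tp_corr S S id.
Proof. by split=> //; rewrite imfset_id. Qed.

Lemma tp_corr_comp S1 S2 S3 f g :
  tp_corr S1 S2 f -> tp_corr S2 S3 g -> tp_corr S1 S3 (g \o f).
Proof.
case=> inj_f im_f ord_f seg_f len_f [inj_g im_g ord_g seg_g len_g].
have f_tps u : u \in tps S1 -> f u \in tps S2 by rewrite -im_f => hu; apply: in_imfset.
split.
- by move=> u v hu hv /= /(inj_g _ _ (f_tps _ hu) (f_tps _ hv)); apply: inj_f.
- by rewrite imfset_comp im_f im_g.
- move=> u v hu hv /=; have [-> -> -> ->] := ord_f u v hu hv.
  exact: ord_g (f_tps _ hu) (f_tps _ hv).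
- by move=> u v hu hv /=; rewrite seg_f // seg_g // f_tps.
- move=> u v hu hv /= huv; apply: leq_trans (len_f _ _ hu hv huv).
  by apply: len_g; rewrite ?f_tps // -seg_f.
Qed.

Lemma tp_corr_trS S T f :
  tp_corr S T f -> tp_corr (trS S) (trS T) (trp \o f \o trp).
Proof.
case=> inj_f im_f ord_f seg_f len_f.
have trp_tps u : u \in tps (trS S) -> trp u \in tps S.
  by rewrite tps_trS -{1}(trpK u) (mem_imfset _ _ trp_inj).
split.
- by move=> u v hu hv /= /trp_inj /(inj_f _ _ (trp_tps _ hu) (trp_tps _ hv)) /trp_inj.
- rewrite !tps_trS -im_f -!imfset_comp; apply: eq_imfset => // x /=.
  by rewrite trpK.
- move=> u v hu hv; have := ord_f _ _ (trp_tps _ hu) (trp_tps _ hv).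
  by case: u v {hu hv} => [? ?] [? ?] /= [-> -> -> ->].
- move=> u v hu hv /=; rewrite segb_trS -{1}(trpK u) -{1}(trpK v) segb_trS.
  exact: seg_f (trp_tps _ hu) (trp_tps _ hv).
- move=> u v hu hv /= huv; rewrite seg_len_trp -[seg_len u v]seg_len_trp.
  by apply: len_f; rewrite ?trp_tps // -segb_trS !trpK.
Qed.

Lemma card_tps_corr S T f : tp_corr S T f -> #|` tps T| = #|` tps S|.
Proof. by case=> inj_f <- _ _ _; rewrite card_in_imfset. Qed.

Lemma card_segs_corr S T f : tp_corr S T f -> #|` segs T| = #|` segs S|.
Proof.
case=> inj_f im_f _ seg_f _.
have -> : segs T = (fun q : pt * pt => (f q.1, f q.2)) @` segs S.
  apply/fsetP => -[x y]; apply/idP/imfsetP.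
  - rewrite mem_segs -im_f /= => /and3P[/imfsetP[a ha ->] /imfsetP[b hb ->] hab].
    by exists (a, b); rewrite // mem_segs /= ha hb /= seg_f.
  - case=> [[a b]]; rewrite mem_segs /= => /and3P[ha hb hab] ->.
    by rewrite mem_segs /= -seg_f // hab -im_f (in_imfset _ f ha) (in_imfset _ f hb).
rewrite card_in_imfset // => [[a b] [a' b']]; rewrite !mem_segs /=.
by case/and3P=> ha hb _ /and3P[ha' hb' _] [/inj_f-> // /inj_f->].
Qed.

(** * Compression of a run of columns *)

Definition shiftx (l r x : int) : int := if r < x then x - (r - l + 1) else x.
Definition unshiftx (l r x : int) : int := if x < l then x else x + (r - l + 1).
Definition keptx (l r x : int) : bool := (x < l) || (r < x).

Lemma shiftcE l r a : shiftc l r a = (shiftx l r a.1, a.2).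
Proof. by rewrite /shiftc /shiftx; case: ifP; case: a. Qed.

Lemma keepcE l r a : keepc l r a = keptx l r a.1.
Proof. by rewrite /keepc /keptx negb_and -!ltNge. Qed.

Ltac shiftx_lia := rewrite ?/keptx ?/shiftx ?/unshiftx; repeat (case: ifP => ?); lia.

Section Shift.

Variables l r : int.
Hypothesis lr : l <= r.

Lemma shiftx_ltE x y : keptx l r x -> keptx l r y -> (x < y) = (shiftx l r x < shiftx l r y).
Proof. by move=> kx ky; apply/idP/idP; move: kx ky; shiftx_lia. Qed.

Lemma shiftx_eqE x y : keptx l r x -> keptx l r y -> (x == y) = (shiftx l r x == shiftx l r y).
Proof. by move=> kx ky; apply/eqP/eqP; move: kx ky; shiftx_lia. Qed.

Lemma shiftx_dist x y : keptx l r x -> keptx l r y ->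
  (absz (shiftx l r y - shiftx l r x) <= absz (y - x))%N.
Proof. by shiftx_lia. Qed.

Lemma shiftxK x : keptx l r x -> unshiftx l r (shiftx l r x) = x.
Proof. by rewrite /keptx /shiftx; case: ifP => ?; rewrite /unshiftx; case: ifP => ?; lia. Qed.

Lemma unshiftxK x : shiftx l r (unshiftx l r x) = x.
Proof. by rewrite /unshiftx; case: ifP => ?; rewrite /shiftx; case: ifP => ?; lia. Qed.

Lemma keptx_unshiftx x : keptx l r (unshiftx l r x).
Proof. by rewrite /keptx /unshiftx; case: ifP => ?; lia. Qed.

Lemma shiftc_inj a b : keepc l r a -> keepc l r b -> shiftc l r a = shiftc l r b -> a = b.
Proof.
rewrite !keepcE !shiftcE => ka kb [/eqP e1 e2]; apply: pt_ext => //.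
by apply/eqP; rewrite shiftx_eqE.
Qed.

Lemma unit_dist_shiftc a b : keepc l r a -> keepc l r b ->
  unit_dist a b -> unit_dist (shiftc l r a) (shiftc l r b).
Proof.
rewrite !keepcE !shiftcE /unit_dist /=; case: a b => [x y] [x' y'] /=.
by shiftx_lia.
Qed.

Lemma transfer_run_edges (P : int -> bool) a b :
  keptx l r a -> keptx l r b -> a < b ->
  (forall x, l <= x <= r -> P x = P (l - 1)) ->
  (forall x, a <= x < b -> P x) <->
  (forall x, shiftx l r a <= x < shiftx l r b -> P (unshiftx l r x)).
Proof.
move=> ka kb ab Prun; split=> HP x hx.
  by apply: HP; move: ka kb hx; shiftx_lia.
have [kx|] := boolP (keptx l r x).
  by rewrite -(shiftxK kx); apply: HP; move: ka kb kx hx; shiftx_lia.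
rewrite /keptx negb_or -!leNgt => /andP[lx xr].
have kl : keptx l r (l - 1) by rewrite /keptx; lia.
by rewrite Prun ?lx // -(shiftxK kl); apply: HP; move: ka kb kl hx; shiftx_lia.
Qed.

Lemma transfer_run_interior (P : int -> bool) a b :
  keptx l r a -> keptx l r b -> a < b ->
  (forall x, l <= x <= r -> P x) ->
  (forall x, a < x < b -> P x) <->
  (forall x, shiftx l r a < x < shiftx l r b -> P (unshiftx l r x)).
Proof.
move=> ka kb ab Prun; split=> HP x hx.
  by apply: HP; move: ka kb hx; shiftx_lia.
have [kx|] := boolP (keptx l r x).
  by rewrite -(shiftxK kx); apply: HP; move: ka kb kx hx; shiftx_lia.
by rewrite /keptx negb_or -!leNgt => /andP[lx xr]; apply: Prun; rewrite lx.
Qed.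

End Shift.

Lemma compressible_col_not_turning S x p :
  compressible_col S x -> p.1 = x -> ~~ turningb S p.
Proof. by case=> _ ntp px; apply/negP; rewrite -mem_tps => /ntp. Qed.

Lemma non_turning_straight S p : p \in V S -> (0 < deg S p)%N -> ~~ turningb S p ->
  (adj S p (p.1 + 1, p.2) && adj S p (p.1 - 1, p.2) && ~~ vnbr S p) ||
  (adj S p (p.1, p.2 + 1) && adj S p (p.1, p.2 - 1) && ~~ hnbr S p).
Proof. by rewrite /turningb /hnbr /vnbr degE => ->; do 4 case: adj. Qed.

(* A node of a compressible column is the interior of a horizontal segment:
   otherwise the column would contain an infinite vertical line. *)
Lemma compressible_col_hadj S p : wf_edges S -> no_isolated S -> p \in V S ->
  compressible_col S p.1 -> adj S p (p.1 + 1, p.2) && adj S p (p.1 - 1, p.2).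
Proof.
move=> wfS niS hp ccp.
have straight q : q \in V S -> q.1 = p.1 ->
    (adj S q (q.1 + 1, q.2) && adj S q (q.1 - 1, q.2) && ~~ vnbr S q) ||
    (adj S q (q.1, q.2 + 1) && adj S q (q.1, q.2 - 1) && ~~ hnbr S q).
  by move=> hq qp; apply: non_turning_straight (niS q hq) (compressible_col_not_turning ccp qp).
case/orP: (straight p hp erefl) => [/andP[] // | /andP[/andP[up _] _]].
have climb n : ((p.1, p.2 + n%:Z) \in V S) && adj S (p.1, p.2 + n%:Z) (p.1, p.2 + n%:Z + 1).
  elim: n => [|n /andP[_ upn]]; first by rewrite addr0 -surjective_pairing hp.
  have [_ hn1 _] := adj_wf wfS upn.
  have -> : p.2 + n.+1%:Z = p.2 + n%:Z + 1 by lia.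
  rewrite hn1; case/orP: (straight _ hn1 erefl) => [/andP[_]|/andP[/andP[-> _] _] //].
  by rewrite /vnbr /= addrK [adj _ _ (_, p.2 + n%:Z)]adjC upn orbT.
exfalso; apply: (@no_nat_injection (V S) (fun n => (p.1, p.2 + n%:Z))).
  by move=> m n [] /addrI /eqP; rewrite eqz_nat => /eqP.
by move=> n; case/andP: (climb n).
Qed.

Lemma all_iota_halfopen (P : int -> bool) (a b : int) : a < b ->
  all (fun i : nat => P (a + i%:Z)) (iota 0 (absz (b - a))) <->
  (forall x, a <= x < b -> P x).
Proof.
move=> ab; split=> [/allP HP x hx | HP].
  have -> : x = a + (absz (x - a))%:Z by lia.
  by apply: HP; rewrite mem_iota; lia.
by apply/allP => i; rewrite mem_iota => hi; apply: HP; lia.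
Qed.

Lemma all_iota_open (P : int -> bool) (a b : int) : a < b ->
  all (fun i : nat => P (a + i%:Z)) (iota 1 (absz (b - a)).-1) <->
  (forall x, a < x < b -> P x).
Proof.
move=> ab; split=> [/allP HP x hx | HP].
  have -> : x = a + (absz (x - a))%:Z by lia.
  by apply: HP; rewrite mem_iota; lia.
by apply/allP => i; rewrite mem_iota => hi; apply: HP; lia.
Qed.

Lemma hsegbP S u v : hsegb S u v <->
  [/\ u.2 = v.2, u.1 < v.1, turningb S u && turningb S v,
      forall x, u.1 <= x < v.1 -> adj S (x, u.2) (x + 1, u.2) &
      forall x, u.1 < x < v.1 -> ~~ turningb S (x, u.2)].
Proof.
rewrite /hsegb; split.
- case/and3P=> /eqP -> uv /and4P[-> -> edges inner]; split=> //.
  + exact: (all_iota_halfopen (fun x => adj S (x, v.2) (x + 1, v.2)) uv).1.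
  + exact: (all_iota_open (fun x => ~~ turningb S (x, v.2)) uv).1.
- case=> -> uv /andP[-> ->] edges inner; rewrite eqxx uv.
  rewrite (all_iota_halfopen (fun x => adj S (x, v.2) (x + 1, v.2)) uv).2 //.
  by rewrite (all_iota_open (fun x => ~~ turningb S (x, v.2)) uv).2.
Qed.

Lemma vsegbP S u v : vsegb S u v <->
  [/\ u.1 = v.1, u.2 < v.2, turningb S u && turningb S v,
      forall y, u.2 <= y < v.2 -> adj S (u.1, y) (u.1, y + 1) &
      forall y, u.2 < y < v.2 -> ~~ turningb S (u.1, y)].
Proof.
rewrite -hsegb_trS hsegbP /= !turningb_trS.
split; case=> e uv tuv edges inner; split=> // y hy.
- by rewrite -adj_trS_xy; apply: edges.
- by rewrite -turningb_trS_xy; apply: inner.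
- by rewrite adj_trS_xy; apply: edges.
- by rewrite turningb_trS_xy; apply: inner.
Qed.

Section CompressibleRun.

Variables (S : gshape) (l r : int).
Hypotheses (wfS : wf_edges S) (niS : no_isolated S).
Hypotheses (lr : l <= r) (runS : forall x, l <= x <= r -> compressible_col S x).

Local Notation T := (compress_cols S l r).

Lemma run_node_hadj x y : l <= x <= r -> (x, y) \in V S ->
  [/\ adj S (x, y) (x + 1, y), adj S (x, y) (x - 1, y),
      (x + 1, y) \in V S & (x - 1, y) \in V S].
Proof.
move=> hx hp; have /andP[hr hl] := compressible_col_hadj wfS niS hp (runS hx).
by have [_ ? _] := adj_wf wfS hr; have [_ ? _] := adj_wf wfS hl.
Qed.

Lemma run_row_occupied x y : l <= x <= r -> ((x, y) \in V S) = ((l, y) \in V S).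
Proof.
suff run_from_l n : l + n%:Z <= r -> ((l + n%:Z, y) \in V S) = ((l, y) \in V S).
  move=> hx; have -> : x = l + (absz (x - l))%:Z by lia.
  by rewrite run_from_l; lia.
elim: n => [|n IH] hn; first by rewrite addr0.
have -> : l + n.+1%:Z = l + n%:Z + 1 by lia.
rewrite -IH; last by lia.
apply/idP/idP => hp.
- have hx : l <= l + n%:Z + 1 <= r by lia.
  by have [_ _ _] := run_node_hadj hx hp; rewrite addrK.
- have hx : l <= l + n%:Z <= r by lia.
  by have [_ _] := run_node_hadj hx hp.
Qed.

Lemma run_hedge x y : l - 1 <= x <= r -> adj S (x, y) (x + 1, y) = ((l, y) \in V S).
Proof.
move=> hx; case: (ltP x l) => hxl.
  have -> : x = l - 1 by lia.
  have hl : l <= l <= r by lia.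
  rewrite subrK; apply/idP/idP => [/(adj_wf wfS)[] // | hly].
  by have [_ + _ _] := run_node_hadj hl hly; rewrite adjC.
have hx' : l <= x <= r by lia.
rewrite -(run_row_occupied y hx'); apply/idP/idP => [/(adj_wf wfS)[] // | hxy].
by have [] := run_node_hadj hx' hxy.
Qed.

Lemma run_row_ends y : (l, y) \in V S -> (l - 1, y) \in V S /\ (r + 1, y) \in V S.
Proof.
move=> hly; have hl : l <= l <= r by lia.
have hr : l <= r <= r by lia.
have hry : (r, y) \in V S by rewrite (run_row_occupied y hr).
by have [_ _ _ ->] := run_node_hadj hl hly; have [_ _ -> _] := run_node_hadj hr hry.
Qed.

Lemma mem_compress_V a : keepc l r a -> (shiftc l r a \in V T) = (a \in V S).
Proof.
move=> ka; apply/imfsetP/idP => [[b] | ha]; last by exists a; rewrite // !inE ha ka.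
by rewrite !inE => /andP[hb kb] /(shiftc_inj lr ka kb) ->.
Qed.

Lemma compress_V_inv q : q \in V T ->
  exists a : pt, [/\ a \in V S, keepc l r a & q = shiftc l r a].
Proof. by case/imfsetP=> a; rewrite !inE => /andP[ha ka] ->; exists a. Qed.

(* The edge joining u_{l-1}(s) to u_{r+1}(s) for the horizontal segment s
   through (l, a.2). *)
Definition bridge (a b : pt) : bool :=
  [&& a.1 == l - 1, b.1 == r + 1, a.2 == b.2 & (l, a.2) \in V S].

Lemma mem_compress_E x y x' y' : keptx l r x -> keptx l r x' ->
  (((shiftx l r x, y), (shiftx l r x', y')) \in E T) =
  (((x, y), (x', y')) \in E S) || bridge (x, y) (x', y').
Proof.
move=> kx kx'; rewrite in_fsetU; congr (_ || _).
  apply/imfsetP/idP => [[[a b]] | hxy]; last first.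
    by exists ((x, y), (x', y')); rewrite ?shiftcE // !inE hxy !keepcE kx kx'.
  rewrite !inE !keepcE !shiftcE => /and3P[hab ka kb] [[/eqP ea ->] [/eqP eb ->]].
  move: ea eb; rewrite -(shiftx_eqE lr kx ka) -(shiftx_eqE lr kx' kb) => /eqP-> /eqP->.
  by rewrite -!surjective_pairing.
rewrite /bridge /=; apply/imfsetP/idP => [[[px py]] | /and4P[/eqP xl /eqP xr /eqP <- hl]].
  rewrite !inE /= => /andP[hp /eqP pl] [[ex ->] [ex' ->]].
  rewrite -pl hp eqxx !andbT.
  by move: kx kx' ex ex'; shiftx_lia.
exists (l, y); first by rewrite !inE hl eqxx.
by rewrite xl xr /shiftx; congr ((_, _), (_, _)); case: ifP => ?; lia.
Qed.

Lemma adj_compress x y x' y' : keptx l r x -> keptx l r x' ->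
  adj T (shiftx l r x, y) (shiftx l r x', y') =
  [|| adj S (x, y) (x', y'), bridge (x, y) (x', y') | bridge (x', y') (x, y)].
Proof.
move=> kx kx'; rewrite /adj !mem_compress_E //.
by case: (_ \in E S); case: (_ \in E S); case: bridge; case: bridge.
Qed.

Lemma bridgeF a b : (a.1 != l - 1) || (b.1 != r + 1) -> bridge a b = false.
Proof. by rewrite /bridge => /orP[] /negbTE ->; rewrite ?andbF. Qed.

Lemma adj_compress_right x y : keptx l r x ->
  adj T (shiftx l r x, y) (shiftx l r x + 1, y) = adj S (x, y) (x + 1, y).
Proof.
move=> kx; have [xl | xl] := eqVneq x (l - 1).
  have kr : keptx l r (r + 1) by rewrite /keptx; lia.
  have -> : shiftx l r x + 1 = shiftx l r (r + 1) by rewrite xl; shiftx_lia.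
  rewrite adj_compress // adj_non_unit //; last by rewrite /unit_dist /=; lia.
  rewrite (@bridgeF (r + 1, y)) /=; last by lia.
  by rewrite /bridge /= xl !eqxx orbF run_hedge //; lia.
have kx1 : keptx l r (x + 1) by move: kx; rewrite /keptx; lia.
have -> : shiftx l r x + 1 = shiftx l r (x + 1) by move: kx; shiftx_lia.
by rewrite adj_compress // !bridgeF ?orbF //=; lia.
Qed.

Lemma adj_compress_left x y : keptx l r x ->
  adj T (shiftx l r x, y) (shiftx l r x - 1, y) = adj S (x, y) (x - 1, y).
Proof.
move=> kx; rewrite adjC [adj S _ _]adjC.
have [xr | xr] := eqVneq x (r + 1).
  have kl : keptx l r (l - 1) by rewrite /keptx; lia.
  have -> : shiftx l r x - 1 = shiftx l r (l - 1) by rewrite xr; shiftx_lia.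
  have -> : shiftx l r x = shiftx l r (l - 1) + 1 by rewrite xr; shiftx_lia.
  rewrite adj_compress_right // run_hedge; last by lia.
  by rewrite xr addrK run_hedge //; lia.
have kx1 : keptx l r (x - 1) by move: kx; rewrite /keptx; lia.
have -> : shiftx l r x - 1 = shiftx l r (x - 1) by move: kx; shiftx_lia.
have -> : shiftx l r x = shiftx l r (x - 1) + 1 by move: kx; shiftx_lia.
by rewrite adj_compress_right // subrK.
Qed.

Lemma adj_compress_vert x y c : keptx l r x ->
  adj T (shiftx l r x, y) (shiftx l r x, y + c) = adj S (x, y) (x, y + c).
Proof. by move=> kx; rewrite adj_compress // !bridgeF ?orbF //=; lia. Qed.

Lemma deg_compress a : keepc l r a -> deg T (shiftc l r a) = deg S a.
Proof.
case: a => x y; rewrite keepcE shiftcE !degE /= => kx.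
by rewrite adj_compress_right // adj_compress_left // !adj_compress_vert.
Qed.

Lemma turningb_compress a : keepc l r a -> turningb T (shiftc l r a) = turningb S a.
Proof.
move=> ka; rewrite /turningb mem_compress_V // deg_compress //.
case: a ka => x y; rewrite keepcE shiftcE /hnbr /vnbr /= => kx.
by rewrite adj_compress_right // adj_compress_left // !adj_compress_vert.
Qed.

Lemma tps_kept a : a \in tps S -> keepc l r a.
Proof.
rewrite keepcE /keptx => ha; apply/negPn/negP; rewrite negb_or -!leNgt => hrun.
by have := compressible_col_not_turning (runS hrun) erefl; rewrite -mem_tps ha.
Qed.

Lemma tps_compress : tps T = shiftc l r @` tps S.
Proof.
apply/fsetP => q; apply/idP/imfsetP => [hq | [a ha ->]].
  have [a [_ ka qa]] := compress_V_inv (tps_sub hq).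
  by exists a; rewrite // mem_tps -(turningb_compress ka) -qa -mem_tps.
by rewrite mem_tps turningb_compress ?tps_kept // -mem_tps.
Qed.

Lemma adj_compress_row x y :
  adj T (x, y) (x + 1, y) = adj S (unshiftx l r x, y) (unshiftx l r x + 1, y).
Proof. by rewrite -adj_compress_right ?keptx_unshiftx // unshiftxK. Qed.

Lemma turningb_compress_row x y : turningb T (x, y) = turningb S (unshiftx l r x, y).
Proof.
have := @turningb_compress (unshiftx l r x, y).
by rewrite keepcE shiftcE /= (unshiftxK lr) => ->; last exact: keptx_unshiftx.
Qed.

Lemma hsegb_compress a b : a \in tps S -> b \in tps S ->
  hsegb S a b = hsegb T (shiftc l r a) (shiftc l r b).
Proof.
move=> ha hb; move: (tps_kept ha) (tps_kept hb).
move: (turningb_compress (tps_kept ha)) (turningb_compress (tps_kept hb)).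
rewrite !keepcE !shiftcE; case: a b {ha hb} => [xa y] [xb y'] /= ta tb ka kb.
have edges_run x : l <= x <= r -> adj S (x, y) (x + 1, y) = adj S (l - 1, y) (l - 1 + 1, y).
  by move=> hx; rewrite !run_hedge //; lia.
have inner_run x : l <= x <= r -> ~~ turningb S (x, y).
  by move=> hx; apply: compressible_col_not_turning (runS hx) _.
have edgesE := transfer_run_edges (P := fun x => adj S (x, y) (x + 1, y)) lr ka kb.
have innerE := transfer_run_interior (P := fun x => ~~ turningb S (x, y)) lr ka kb.
apply/idP/idP => /hsegbP[/= yy' ab tab edges inner]; apply/hsegbP => /=; subst y'.
  rewrite ta tb -shiftx_ltE //; split=> // x hx.
  - by rewrite adj_compress_row; apply: (edgesE ab edges_run).1 edges x hx.
  - by rewrite turningb_compress_row; apply: (innerE ab inner_run).1 inner x hx.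
rewrite ta tb in tab; rewrite -(shiftx_ltE lr ka kb) in ab; split=> //.
- by apply: (edgesE ab edges_run).2 => x hx; rewrite -adj_compress_row; apply: edges.
- by apply: (innerE ab inner_run).2 => x hx; rewrite -turningb_compress_row; apply: inner.
Qed.

Lemma vsegb_compress a b : a \in tps S -> b \in tps S ->
  vsegb S a b = vsegb T (shiftc l r a) (shiftc l r b).
Proof.
move=> ha hb; move: (tps_kept ha) (tps_kept hb).
move: (turningb_compress (tps_kept ha)) (turningb_compress (tps_kept hb)).
rewrite !keepcE !shiftcE; case: a b {ha hb} => [x ya] [x' yb] /= ta tb kx kx'.
have tcol y : turningb T (shiftx l r x, y) = turningb S (x, y).
  by have := @turningb_compress (x, y); rewrite keepcE shiftcE; apply.
apply/idP/idP => /vsegbP[/= xx' ab tab edges inner]; apply/vsegbP => /=.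
  subst x'; rewrite ta tb; split=> // y hy.
  - by rewrite adj_compress_vert //; apply: edges.
  - by rewrite tcol; apply: inner.
move/eqP: xx'; rewrite -(shiftx_eqE lr kx kx') => /eqP xx'; subst x'.
rewrite ta tb in tab; split=> // y hy.
- by rewrite -(adj_compress_vert _ _ kx); apply: edges.
- by rewrite -tcol; apply: inner.
Qed.

Lemma wf_edges_compress : wf_edges T.
Proof.
move=> e; rewrite in_fsetU => /orP[] /imfsetP[e0]; rewrite !inE.
  case/and3P=> he ka kb -> /=; have [ha hb hab] := wfS he.
  by rewrite !mem_compress_V // unit_dist_shiftc.
case: e0 => x y /andP[hp /eqP /= xl] -> /=; subst x.
have [hl hr] := run_row_ends hp.
have [kl kr] : keepc l r (l - 1, y) /\ keepc l r (r + 1, y) by rewrite !keepcE /keptx /=; lia.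
have e1 : shiftc l r (l - 1, y) = (l - 1, y) by rewrite shiftcE /shiftx /=; case: ifP => //; lia.
have e2 : shiftc l r (r + 1, y) = (l, y).
  by rewrite shiftcE /shiftx /=; case: ifP => ?; [congr (_, _) | ]; lia.
by rewrite -{1}e1 -{1}e2 !mem_compress_V //; split=> //; rewrite /unit_dist /=; lia.
Qed.

Lemma no_isolated_compress : no_isolated T.
Proof. by move=> q /compress_V_inv[a [ha ka ->]]; rewrite deg_compress //; exact: niS. Qed.

Lemma cols_convex_compress : cols_convex S -> cols_convex T.
Proof.
move=> ccS _ _ /compress_V_inv[a [ha ka ->]] /compress_V_inv[b [hb kb ->]] x.
rewrite !shiftcE /= => hx; rewrite !keepcE in ka kb.
have [z hz zx] : exists2 z, z \in V S & z.1 = unshiftx l r x.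
  by apply: (ccS _ _ ha hb (unshiftx l r x)); move: ka kb hx; shiftx_lia.
have kz : keepc l r z by rewrite keepcE zx keptx_unshiftx.
by exists (shiftc l r z); rewrite ?mem_compress_V // shiftcE /= zx unshiftxK.
Qed.

Lemma rows_convex_compress : rows_convex S -> rows_convex T.
Proof.
move=> rcS _ _ /compress_V_inv[a [ha ka ->]] /compress_V_inv[b [hb kb ->]] y.
rewrite !shiftcE /= => /(rcS _ _ ha hb)[[zx zy] hz /= <-].
have [kz | ] := boolP (keepc l r (zx, zy)).
  by exists (shiftc l r (zx, zy)); rewrite ?mem_compress_V // shiftcE.
rewrite keepcE /keptx negb_or -!leNgt /= => hzx.
rewrite (run_row_occupied _ hzx) in hz; have [hl _] := run_row_ends hz.
have kl : keepc l r (l - 1, zy) by rewrite keepcE /keptx /=; lia.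
by exists (shiftc l r (l - 1, zy)); rewrite ?mem_compress_V // shiftcE.
Qed.

Lemma tp_corr_compress : tp_corr S T (shiftc l r).
Proof.
split.
- by move=> u v hu hv; apply: (shiftc_inj lr (tps_kept hu) (tps_kept hv)).
- by rewrite tps_compress.
- move=> u v /tps_kept ku /tps_kept kv; rewrite !shiftcE /=; rewrite !keepcE in ku kv.
  by rewrite -!shiftx_ltE // -!shiftx_eqE.
- by move=> u v hu hv; rewrite /segb hsegb_compress // vsegb_compress.
- move=> u v /tps_kept ku /tps_kept kv _; rewrite !shiftcE /seg_len /=.
  by rewrite !keepcE in ku kv; rewrite leq_add2r shiftx_dist.
Qed.

End CompressibleRun.

Lemma compress_cols_spec S l r : shape_inv S -> max_col_run S l r ->
  shape_inv (compress_cols S l r) /\ tp_corr S (compress_cols S l r) (shiftc l r).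
Proof.
case=> wfS niS ccS rcS [lr runS _ _]; split; last exact: tp_corr_compress.
split; [exact: wf_edges_compress | exact: no_isolated_compress
       | exact: cols_convex_compress | exact: rows_convex_compress].
Qed.

Lemma compress_step_spec S S' : shape_inv S -> compress_step S S' ->
  shape_inv S' /\ exists f, tp_corr S S' f.
Proof.
move=> invS [l r runS | l r /max_row_run_trS runS].
  by have [? ?] := compress_cols_spec invS runS; split=> //; exists (shiftc l r).
have [invT corr] := compress_cols_spec (shape_inv_trS invS) runS.
split; first exact: shape_inv_trS.
by exists (trp \o shiftc l r \o trp); have := tp_corr_trS corr; rewrite trSK.
Qed.

Lemma compresses_spec S T : compresses S T -> shape_inv S ->
  shape_inv T /\ exists f, tp_corr S T f.
Proof.
elim=> [S0 | S1 S2 S3 step _ IH] inv1; first by split=> //; exists id; exact: tp_corr_id.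
have [inv2 [f corr_f]] := compress_step_spec inv1 step.
have [inv3 [g corr_g]] := IH inv2.
by split=> //; exists (g \o f); exact: tp_corr_comp corr_f corr_g.
Qed.

(** * Incompressible shapes fit in a square *)

Lemma seq_argmin (T : eqType) (c : T -> int) (s : seq T) : s != [::] ->
  exists2 m, m \in s & forall z, z \in s -> c m <= c z.
Proof.
elim: s => [//|a s IH] _; have [-> | /IH[m ms minm]] := eqVneq s [::].
  by exists a => [|z]; rewrite ?mem_head // inE => /eqP->.
have [am | ma] := leP (c a) (c m).
  by exists a => [|z]; rewrite ?mem_head // inE => /predU1P[-> // | /minm]; lia.
by exists m => [|z]; rewrite ?inE ?ms ?orbT // => /predU1P[-> | /minm //]; lia.
Qed.

Lemma occupied_col_has_tp T x : (exists2 z : pt, z \in V T & z.1 = x) ->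
  ~ compressible_col T x -> exists2 t : pt, t \in tps T & t.1 = x.
Proof.
move=> occ ncx; have [/hasP[t ht /eqP tx] | /hasPn ntp] :=
  boolP (has (fun t : pt => t.1 == x) (enum_fset (tps T))); first by exists t.
case: ncx; split=> [| t /ntp /eqP //]; by case: occ => z; exists z.
Qed.

(* Each of the columns between the leftmost one and that of [p] is occupied,
   hence contains a turning point: there are at most [#|` tps T|] of them. *)
Lemma incompressible_cols_fit T : cols_convex T -> (forall x, ~ compressible_col T x) ->
  exists x0 : int, forall p : pt, p \in V T -> x0 <= p.1 < x0 + #|` tps T|%:Z.
Proof.
move=> ccT ncT; set k := #|` tps T|; have [VT0 | ] := eqVneq (V T) fset0.
  by exists 0 => p; rewrite VT0 in_fset0.
case/fset0Pn=> q hq.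
have [p0 hp0 minp0] : exists2 p0 : pt, p0 \in V T & forall p : pt, p \in V T -> p0.1 <= p.1.
  apply: seq_argmin; apply: contraTneq hq => VT0.
  by rewrite -[q \in V T]/(q \in enum_fset (V T)) VT0.
exists p0.1 => p hp; rewrite minp0 //=.
have sub : {subset [seq p0.1 + i%:Z | i <- iota 0 (absz (p.1 - p0.1)).+1]
             <= [seq t.1 | t <- enum_fset (tps T)]}.
  move=> y /mapP[i]; rewrite mem_iota => hi ->.
  have [|t ht <-] := occupied_col_has_tp (ccT _ _ hp0 hp (p0.1 + i%:Z) _) (ncT _).
    by have := minp0 p hp; lia.
  exact: map_f.
have lt : (absz (p.1 - p0.1)%R < k)%N.
  have := uniq_leq_size _ sub; rewrite map_inj_uniq ?iota_uniq; last first.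
    by move=> i j /addrI /eqP; rewrite eqz_nat => /eqP.
  by rewrite !size_map size_iota => /(_ isT).
by have := minp0 p hp; lia.
Qed.

Lemma fits_in_incompressible T : shape_inv T -> incompressible T -> fits_in #|` tps T| T.
Proof.
move=> invT [ncT nrT]; have [_ _ ccT _] := invT.
have [_ _ ccT' _] := shape_inv_trS invT.
have [x0 fitx] := incompressible_cols_fit ccT ncT.
have ncT' y : ~ compressible_col (trS T) y by move/compressible_row_trS; exact: nrT.
have [y0 fity] := incompressible_cols_fit ccT' ncT'.
exists x0, y0 => p hp; split; first exact: fitx.
have card_tr : #|` trp @` tps T| = #|` tps T| by rewrite card_in_imfset //; exact: in2W trp_inj.
by have := fity (trp p); rewrite mem_trS_V tps_trS card_tr; apply.
Qed.

Lemma card_fset_le1_eq (A : {fset pt}) a b :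
  (#|` A| <= 1)%N -> a \in A -> b \in A -> a = b.
Proof.
move=> A1 ha hb; apply/eqP; apply: contraTT A1 => ab.
have /fsubset_leq_card : [fset a; b] `<=` A.
  by apply/fsubsetP => x; rewrite !inE => /orP[] /eqP->.
by rewrite cardfs2 ab -ltnNge.
Qed.

Lemma tps_single S : wf_edges S -> (#|` V S| <= 1)%N -> tps S = fset0.
Proof.
move=> wfS S1; apply/fsetP => t; rewrite in_fset0 mem_tps; apply/negbTE/negP => /[dup] ht.
have no_adj z : adj S t z = false.
  apply/negbTE/negP => /(adj_wf wfS)[ht' /(card_fset_le1_eq S1 ht') <-].
  by rewrite /unit_dist; lia.
by rewrite /turningb /deg /hnbr /vnbr /= !no_adj andbF.
Qed.

Lemma compress_cols_single S l r : (#|` V S| <= 1)%N -> max_col_run S l r ->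
  V (compress_cols S l r) = fset0.
Proof.
move=> S1 [lr runS _ _]; have ll : l <= l <= r by lia.
have [[p [hp pl]] _] := runS l ll.
apply/fsetP => q; rewrite in_fset0; apply/negbTE/negP => /imfsetP[a]; rewrite !inE => /andP[ha].
by rewrite (card_fset_le1_eq S1 ha hp) keepcE /keptx pl; lia.
Qed.

Lemma compress_step_single S S' : (#|` V S| <= 1)%N -> compress_step S S' -> V S' = fset0.
Proof.
move=> S1 [l r /(compress_cols_single S1) // | l r /max_row_run_trS].
have trS1 : (#|` V (trS S)| <= 1)%N by rewrite /= card_in_imfset //; exact: in2W trp_inj.
by move=> /(compress_cols_single trS1); rewrite /compress_rows /trS /= => ->; rewrite imfset0.
Qed.

Lemma compresses_single S T : (#|` V S| <= 1)%N -> compresses S T -> T = S \/ V T = fset0.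
Proof.
move=> + ST; elim: ST => [S0 _ | S1 S2 S3 step _ IH S1le]; first by left.
have V2 := compress_step_single S1le step.
by right; case: IH => [|->|]; rewrite ?V2 ?cardfs0.
Qed.

Lemma single_compresses_spec S T : is_shape S -> (#|` V S| <= 1)%N ->
  compresses S T -> incompressible T -> tp_corr S T id /\ fits_in #|` tps T| T.
Proof.
case=> /fset0Pn[p hp] wfS _ S1 ST [ncT _]; have tps0 := tps_single wfS S1.
have VT0 : V T = fset0.
  case: (compresses_single S1 ST) => // TS; case: (ncT p.1); rewrite TS.
  by split=> [| t]; [exists p | rewrite tps0 in_fset0].
have tpsT0 : tps T = fset0.
  by apply/fsetP => t; rewrite in_fset0; apply/negbTE/negP => /tps_sub; rewrite VT0 in_fset0.
split; last by exists 0, 0 => q; rewrite VT0 in_fset0.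
by split; rewrite ?tps0 ?tpsT0 ?imfset0 // => u v; rewrite in_fset0.
Qed.

Theorem proposition2p2 (S T : gshape) (k l : nat) :
  is_shape S -> #|` tps S| = k -> #|` segs S| = l ->
  compresses S T -> incompressible T ->
  [/\ #|` tps T| = k /\ #|` segs T| = l,
      exists f : pt -> pt,
        [/\ {in tps S &, injective f},
            f @` tps S = tps T,
            {in tps S &, forall u v,
               [/\ (u.1 < v.1) = ((f u).1 < (f v).1),
                   (u.1 == v.1) = ((f u).1 == (f v).1),
                   (u.2 < v.2) = ((f u).2 < (f v).2) &
                   (u.2 == v.2) = ((f u).2 == (f v).2)]},
            {in tps S &, forall u v, segb S u v = segb T (f u) (f v)} &
            {in tps S &, forall u v, segb S u v ->
               (seg_len (f u) (f v) <= seg_len u v)%N}]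
    & fits_in k T].
Proof.
move=> hS <- <- ST incT.
have [[f corr] fitT] : (exists f, tp_corr S T f) /\ fits_in #|` tps T| T.
  have [S1 | S2] := leqP #|` V S| 1.
    by have [corr fitT] := single_compresses_spec hS S1 ST incT; split=> //; exists id.
  have [invT corr] := compresses_spec ST (shape_inv_of_shape hS S2).
  by split=> //; exact: fits_in_incompressible.
rewrite (card_tps_corr corr) in fitT.
by split=> //; [rewrite (card_tps_corr corr) (card_segs_corr corr) | exists f].
Qed.
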